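(* Let $n,d$ be natural numbers and $h$ an integer. Let $(z_j)$ be a sequence of Gaussian integers such that every two consecutive terms satisfy $|z_{j+1}-z_j|=1$, and suppose there are indices $j_1,j_2$ with $z_{j_2}-z_{j_1}=n+ih$. If $k(n,d)\geq |r(n,d)|+|h|+1$, then there exist indices $j_3,j_4$ with $z_{j_3}-z_{j_4}=d$.
   Context: For integers $n$ and $d\ge1$, $k(n,d)$ and $r(n,d)$ are the unique integers with $n=k(n,d)\,d+r(n,d)$ and $r(n,d)\in\left[-\lfloor d/2\rfloor,\ \lceil d/2\rceil-1\right]$. *)

From mathcomp Require Import all_boot all_order all_algebra.
Set Implicit Arguments. Unset Strict Implicit. Unset Printing Implicit Defensive.
Import Order.TTheory GRing.Theory Num.Theory.
Local Open Scope ring_scope.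

(* Gaussian integers a + i b are represented as pairs (a, b) : int * int. *)
Definition gauss := (int * int)%type.

Definition gsub (z w : gauss) : gauss := (z.1 - w.1, z.2 - w.2).

Definition gnorm2 (z : gauss) : int := z.1 ^+ 2 + z.2 ^+ 2.

(* k(n,d) and r(n,d): n = k d + r with r in [-floor(d/2), ceil(d/2) - 1].
   Explicitly k = floor((n + floor(d/2)) / d), r = n - k d  (for d >= 1). *)
Definition kq (n d : int) : int := ((n + (d %/ 2)%Z) %/ d)%Z.
Definition rq (n d : int) : int := n - kq n d * d.

(* Suppose the path has no horizontal chord of length [d].  The sub-path between
   a highest and a lowest vertex, prolonged by the upward vertical half-line at the
   highest one, splits the horizontal strip spanned by the path into two sides,
   told apart by counting signed crossings of horizontal half-lines.  A horizontal
   translate of the path by [c <> 0] that avoids the path is connected, so it lies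
   on the left side if [c < 0] and on the right side if [c > 0].  Hence the
   translates by [d] and by [-jd] never meet, and by induction there is no chord of
   length [jd] for any [j <> 0].
   Now join [z j2] to the translate of [z j1] by [kd] with a shortest lattice path
   of length [|r| + |h|] inside the strip.  For [0 < j < k] its translate by [-jd]
   runs from the left side to the right side, so it meets the path at an interior
   vertex, and different [j] give different vertices since there is no chord of
   length [(j - j')d].  Thus [k <= |r| + |h|], a contradiction. *)

From mathcomp Require Import all_boot all_order all_algebra.
From mathcomp Require Import zify.
Import Order.TTheory GRing.Theory Num.Theory.
Local Open Scope ring_scope.
Set Implicit Arguments. Unset Strict Implicit. Unset Printing Implicit Defensive.

Lemma sum_sqr_eq1 (p q : int) : p * p + q * q = 1 ->
  (p = 1 \/ p = -1) /\ q = 0 \/ p = 0 /\ (q = 1 \/ q = -1).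
Proof.
move=> pq1; have p_small : -1 <= p <= 1 by nia.
have q_small : -1 <= q <= 1 by nia.
have [p_val q_val] : (p = -1 \/ p = 0 \/ p = 1) /\ (q = -1 \/ q = 0 \/ q = 1) by lia.
by case: p_val => [|[|]] pv; case: q_val => [|[|]] qv; move: pq1; rewrite pv qv /=; lia.
Qed.

Lemma unit_stepP (a b : gauss) : gnorm2 (gsub b a) = 1 <->
  [\/ b = (a.1 + 1, a.2), b = (a.1 - 1, a.2), b = (a.1, a.2 + 1) | b = (a.1, a.2 - 1)].
Proof.
case: a b => [a1 a2] [b1 b2]; rewrite /gnorm2 /gsub /= !expr2; split.
  by case/sum_sqr_eq1=> [[[e1|e1] e2]|[e1 [e2|e2]]];
    [apply: Or41|apply: Or42|apply: Or43|apply: Or44]; congr (_, _); lia.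
by case=> -[-> ->]; nia.
Qed.

Definition hshift (p : gauss) (c : int) : gauss := (p.1 + c, p.2).

Lemma gsub_hshift (a b : gauss) (c : int) : gsub (hshift b c) (hshift a c) = gsub b a.
Proof. by rewrite /gsub /hshift /= opprD addrACA subrr addr0. Qed.

Lemma gsub_hshiftl (p : gauss) (c : int) : gsub (hshift p c) p = (c, 0).
Proof. by rewrite /gsub /hshift /= addrAC subrr add0r subrr. Qed.

Lemma hshiftD (p : gauss) (a b : int) : hshift (hshift p a) b = hshift p (a + b).
Proof. by rewrite /hshift /= addrA. Qed.

Lemma hshiftK (c : int) : cancel (hshift^~ c) (hshift^~ (- c)).
Proof. by case=> a b; rewrite /hshift /= addrK. Qed.

(* [cross a b x y] is the signed number of crossings of the half-line
   [{(t, y + 1/2) | t > x}] by the segment from [a] to [b]. *)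
Definition cross (a b : gauss) (x y : int) : int :=
  if (a.1 == b.1) && (x < a.1) then
    if (a.2 == y) && (b.2 == y + 1) then 1
    else if (a.2 == y + 1) && (b.2 == y) then -1 else 0
  else 0.

Definition right_on_row (p : gauss) (x y : int) : int :=
  if (p.2 == y) && (x < p.1) then 1 else 0.

Lemma cross_up (a b : gauss) (x y : int) : gnorm2 (gsub b a) = 1 ->
  a != (x, y + 1) -> b != (x, y + 1) ->
  cross a b x y - cross a b x (y + 1) = right_on_row b x (y + 1) - right_on_row a x (y + 1).
Proof.
case: a => a1 a2 /unit_stepP[]->; rewrite !xpair_eqE /cross /right_on_row /=;
  by repeat case: ifP; lia.
Qed.

Lemma cross_right (a b : gauss) (x y : int) : a != (x + 1, y) -> b != (x + 1, y) ->
  cross a b x y = cross a b (x + 1) y.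
Proof.
case: a b => a1 a2 [b1 b2]; rewrite !xpair_eqE /cross /=; by repeat case: ifP; lia.
Qed.

Lemma cross_below (a b : gauss) (x y : int) : a.2 <= y -> b.2 <= y -> cross a b x y = 0.
Proof. by rewrite /cross; repeat case: ifP; lia. Qed.

Definition l1dist (p q : gauss) : nat := (`|q.1 - p.1| + `|q.2 - p.2|)%N.

Lemma step_toward (N : nat) (p q : gauss) (lo hi : int) : l1dist p q = N.+1 ->
  lo <= p.2 <= hi -> lo <= q.2 <= hi ->
  exists2 p', gnorm2 (gsub p' p) = 1 & l1dist p' q = N /\ lo <= p'.2 <= hi.
Proof.
case: p q => [p1 p2] [q1 q2] dist p_strip q_strip.
rewrite /l1dist /= in dist p_strip q_strip *.
have [h1|h1|h1] := ltgtP p1 q1; last have [h2|h2|h2] := ltgtP p2 q2.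
- by exists (p1 + 1, p2); [apply/unit_stepP/Or41 | rewrite /l1dist /=; lia].
- by exists (p1 - 1, p2); [apply/unit_stepP/Or42 | rewrite /l1dist /=; lia].
- by exists (p1, p2 + 1); [apply/unit_stepP/Or43 | rewrite /l1dist /=; lia].
- by exists (p1, p2 - 1); [apply/unit_stepP/Or44 | rewrite /l1dist /=; lia].
- lia.
Qed.

Lemma lattice_path (N : nat) (p q : gauss) (lo hi : int) : l1dist p q = N ->
  lo <= p.2 <= hi -> lo <= q.2 <= hi ->
  exists v : nat -> gauss, [/\ v 0%N = p, v N = q,
    forall i, (i < N)%N -> gnorm2 (gsub (v i.+1) (v i)) = 1 &
    forall i, (i <= N)%N -> lo <= (v i).2 <= hi].
Proof.
elim: N p => [|N IH] p dist p_strip q_strip.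
  exists (fun=> p); split => //; move: dist; case: p q {p_strip q_strip} => [p1 p2] [q1 q2].
  by rewrite /l1dist /= => dist; congr (_, _); lia.
have [p' step [dist' p'_strip]] := step_toward dist p_strip q_strip.
have [v [v0 vN steps strip]] := IH p' dist' p'_strip q_strip.
exists (fun i => if i is i'.+1 then v i' else p); split => //.
- by case=> [|i] iN /=; [rewrite v0 | apply: steps].
- by case=> [|i] iN //=; apply: strip.
Qed.

Lemma leq_of_injective_rel (A B : nat) (R : 'I_A -> 'I_B -> bool) :
  (forall j, exists i, R j i) -> (forall i j j', R j i -> R j' i -> j = j') ->
  (A <= B)%N.
Proof.
move=> total inj; pose f j := xchoose (total j).
rewrite -[A]card_ord -[B]card_ord; apply: (@leq_card _ _ f) => j j' fjj'.
by apply: (inj (f j)); [exact: xchooseP | rewrite fjj'; exact: xchooseP].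
Qed.

Section LatticePath.

Variables (z : nat -> gauss) (m : nat).
Hypothesis unit_steps : forall j, (j < m)%N -> gnorm2 (gsub (z j.+1) (z j)) = 1.

Definition on_path (q : gauss) : bool := [exists i : 'I_m.+1, z i == q].

Lemma on_pathP (q : gauss) : reflect (exists2 i, (i <= m)%N & z i = q) (on_path q).
Proof.
apply: (iffP existsP) => [[i /eqP <-]|[i im <-]]; first by exists i; [have := ltn_ord i|].
by exists (Ordinal (im : (i < m.+1)%N)).
Qed.

Lemma off_path (q : gauss) (i : nat) : (i <= m)%N -> ~~ on_path q -> z i != q.
Proof. by move=> im /on_pathP qz; apply/eqP => ziq; apply: qz; exists i. Qed.

Definition chord_free (c : int) : Prop :=
  forall a b, (a <= m)%N -> (b <= m)%N -> hshift (z a) c <> z b.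

Lemma chord_freeN (c : int) : chord_free c -> chord_free (- c).
Proof.
move=> cf a b am bm zab; apply: (cf b a bm am).
by rewrite -zab; have := hshiftK (- c) (z a); rewrite opprK.
Qed.

Lemma chord_of_not_chord_free (c : int) : ~ chord_free c ->
  exists a b : nat, [/\ (a <= m)%N, (b <= m)%N & gsub (z a) (z b) = (c, 0)].
Proof.
move=> not_cf.
have [/existsP[a /existsP[b /eqP zab]]|none] :=
  boolP [exists a : 'I_m.+1, exists b : 'I_m.+1, gsub (z a) (z b) == (c, 0)].
  by exists a, b; split; [have := ltn_ord a | have := ltn_ord b |].
case: not_cf => a b am bm zab; move/negP: none; apply; apply/existsP.
exists (Ordinal (bm : (b < m.+1)%N)); apply/existsP; exists (Ordinal (am : (a < m.+1)%N)).
by rewrite /= -zab gsub_hshiftl.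
Qed.

Lemma chord_free_off_path (c : int) (a : nat) : chord_free c -> (a <= m)%N ->
  ~~ on_path (hshift (z a) c).
Proof. by move=> cf am; apply/on_pathP => -[b bm zb]; apply: (cf a b am bm). Qed.

Definition crossings (N : nat) (q : gauss) : int :=
  \sum_(i < N) cross (z i) (z i.+1) q.1 q.2.

Lemma crossings_up (N : nat) (x y : int) : (N <= m)%N -> ~~ on_path (x, y + 1) ->
  crossings N (x, y) - crossings N (x, y + 1)
  = right_on_row (z N) x (y + 1) - right_on_row (z 0) x (y + 1).
Proof.
move=> + off; elim: N => [|N IH] Nm; first by rewrite /crossings !big_ord0 !subrr.
have zN_off : z N != (x, y + 1) := off_path (ltnW Nm) off.
have zSN_off : z N.+1 != (x, y + 1) := off_path Nm off.
rewrite /crossings !big_ord_recr /= opprD addrACA IH ?(ltnW Nm) //.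
by rewrite cross_up ?unit_steps // addrC addrA subrK.
Qed.

Lemma crossings_right (N : nat) (x y : int) : (N <= m)%N -> ~~ on_path (x + 1, y) ->
  crossings N (x, y) = crossings N (x + 1, y).
Proof.
move=> Nm off; apply: eq_bigr => i _.
have im : (i < m)%N := leq_trans (ltn_ord i) Nm.
by apply: cross_right; apply: off_path off; [apply: ltnW|].
Qed.

Lemma crossings_below (N : nat) (x y : int) : (N <= m)%N ->
  (forall i, (i <= m)%N -> (z i).2 <= y) -> crossings N (x, y) = 0.
Proof.
move=> Nm below; apply: big1 => i _.
have im : (i < m)%N := leq_trans (ltn_ord i) Nm.
by apply: cross_below; apply: below; [apply: ltnW|].
Qed.

Section Side.

Variables ip iq : nat.
Hypotheses (ip_m : (ip <= m)%N) (iq_m : (iq <= m)%N).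
Hypothesis highest : forall i, (i <= m)%N -> (z i).2 <= (z ip).2.
Hypothesis lowest : forall i, (i <= m)%N -> (z iq).2 <= (z i).2.

Definition in_strip (q : gauss) : bool := (z iq).2 <= q.2 <= (z ip).2.

(* The signed number of crossings of the half-line from [q] by the curve made of
   the path from [z ip] to [z iq] followed by the upward half-line at [z ip];
   inside the strip it tells on which side of this curve [q] lies. *)
Definition side (q : gauss) : int :=
  crossings iq q - crossings ip q - right_on_row (z ip) q.1 q.2.

Lemma side_up (x y : int) : (z iq).2 <= y -> y + 1 <= (z ip).2 ->
  ~~ on_path (x, y + 1) -> side (x, y) = side (x, y + 1).
Proof.
move=> lo hi off; have := crossings_up iq_m off; have := crossings_up ip_m off.
have := lowest iq_m; rewrite /side /right_on_row /=.
by repeat case: ifP; lia.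
Qed.

Lemma side_right (x y : int) : ~~ on_path (x + 1, y) -> side (x, y) = side (x + 1, y).
Proof.
move=> off; have := off_path ip_m off.
rewrite /side /= -(crossings_right ip_m off) -(crossings_right iq_m off) /right_on_row.
case: (z ip) => a b; rewrite xpair_eqE /=; by repeat case: ifP; lia.
Qed.

Lemma side_step (p q : gauss) : gnorm2 (gsub q p) = 1 ->
  ~~ on_path p -> ~~ on_path q -> in_strip p -> in_strip q -> side p = side q.
Proof.
case: p => x y /unit_stepP[]-> off_p off_q /andP[/= lo_p hi_p] /andP[/= lo_q hi_q].
- exact: side_right.
- by have := side_right (x := x - 1) (y := y); rewrite subrK => ->.
- exact: side_up.
- by have := side_up (x := x) (y := y - 1); rewrite subrK => -> //; lia.
Qed.

Lemma side_along (v : nat -> gauss) (L : nat) :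
  (forall i, (i < L)%N -> gnorm2 (gsub (v i.+1) (v i)) = 1) ->
  (forall i, (i <= L)%N -> ~~ on_path (v i) && in_strip (v i)) ->
  side (v L) = side (v 0).
Proof.
elim: L => [//|L IH] steps good.
have /andP[off_L strip_L] := good L (leqnSn L).
have /andP[off_SL strip_SL] := good L.+1 (leqnn _).
rewrite -(side_step (steps L (ltnSn L))) // IH // => [i iL|i iL].
- exact: steps (ltnW iL).
- exact: good (leqW iL).
Qed.

Lemma side_highest (x : int) : side (x, (z ip).2) = if x < (z ip).1 then -1 else 0.
Proof.
rewrite /side /= (crossings_below x ip_m highest) (crossings_below x iq_m highest).
by rewrite /right_on_row eqxx /=; case: ifP.
Qed.

(* A translate of the path that avoids it is connected and stays in the strip,
   so it lies on one side; its highest point shows which one. *)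
Lemma side_hshift (c : int) (a : nat) : c != 0 -> chord_free c -> (a <= m)%N ->
  side (hshift (z a) c) = if c < 0 then -1 else 0.
Proof.
move=> c_neq0 cf.
have side_0 b : (b <= m)%N -> side (hshift (z b) c) = side (hshift (z 0) c).
  move=> bm; apply: (side_along (v := fun i => hshift (z i) c)) => [i ib|i ib].
  - by rewrite gsub_hshift unit_steps // (leq_trans ib bm).
  - have im : (i <= m)%N := leq_trans ib bm.
    by rewrite chord_free_off_path //= /in_strip /= highest ?lowest.
move=> am; rewrite side_0 // -(side_0 ip ip_m) side_highest /=.
by case: ifP; case: ifP; lia.
Qed.

Lemma chord_free_muln (d : int) : 0 < d -> chord_free d ->
  forall j : nat, (0 < j)%N -> chord_free (j%:Z * d).
Proof.
move=> d_gt0 cf; elim=> [//|[_ _|j IH _]]; first by rewrite mul1r.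
move=> a b am bm zab.
have jd_gt0 : 0 < j.+1%:Z * d by rewrite mulr_gt0.
have cf_j : chord_free (- (j.+1%:Z * d)) := chord_freeN (IH isT).
have : hshift (z b) (- (j.+1%:Z * d)) = hshift (z a) d.
  by rewrite -zab hshiftD intS mulrDl mul1r addrK.
move/(congr1 side).
by rewrite (side_hshift _ cf_j bm) ?(side_hshift _ cf am); do ?case: ifP; lia.
Qed.

Lemma translate_meets (v : nat -> gauss) (L : nat) (c1 c2 : int) (a b : nat) :
  (forall i, (i < L)%N -> gnorm2 (gsub (v i.+1) (v i)) = 1) ->
  (forall i, (i <= L)%N -> in_strip (v i)) ->
  (a <= m)%N -> (b <= m)%N -> c1 < 0 -> 0 < c2 -> chord_free c1 -> chord_free c2 ->
  v 0 = hshift (z a) c1 -> v L = hshift (z b) c2 ->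
  exists2 i, (0 < i < L)%N & on_path (v i).
Proof.
move=> steps strip am bm c1_lt0 c2_gt0 cf1 cf2 v0 vL.
case: (boolP [exists i : 'I_L.+1, on_path (v i)]) => [/existsP[i on_i]|none].
  exists i => //; apply/andP; split.
  - by rewrite lt0n; apply: contraTneq on_i => ->; rewrite v0 chord_free_off_path.
  - rewrite ltn_neqAle -ltnS ltn_ord andbT.
    by apply: contraTneq on_i => ->; rewrite vL chord_free_off_path.
exfalso; suff: side (v L) = side (v 0).
  by rewrite vL v0 !side_hshift //; do ?case: ifP; lia.
apply: side_along => // i iL; rewrite strip // andbT.
by apply: contra none => on_i; apply/existsP; exists (Ordinal (iL : (i < L.+1)%N)).
Qed.

End Side.

Lemma extreme_heights : exists ip iq : nat, [/\ (ip <= m)%N, (iq <= m)%N,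
  forall i, (i <= m)%N -> (z i).2 <= (z ip).2 &
  forall i, (i <= m)%N -> (z iq).2 <= (z i).2].
Proof.
have [ip _ highest] := @arg_maxP _ _ _ (ord0 : 'I_m.+1) xpredT (fun i => (z i).2) isT.
have [iq _ lowest] := @arg_minP _ _ _ (ord0 : 'I_m.+1) xpredT (fun i => (z i).2) isT.
exists ip, iq; split; [have := ltn_ord ip | have := ltn_ord iq | |] => // i im.
- exact: (highest (Ordinal (im : (i < m.+1)%N))).
- exact: (lowest (Ordinal (im : (i < m.+1)%N))).
Qed.

Lemma chord_free_mulz (d j : int) : 0 < d -> chord_free d -> j != 0 -> chord_free (j * d).
Proof.
move=> d_gt0 cf; have [ip [iq [ip_m iq_m highest lowest]]] := extreme_heights.
have cf_muln := chord_free_muln ip_m iq_m highest lowest d_gt0 cf.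
case: j => j j_neq0; first by apply: cf_muln; rewrite lt0n.
by rewrite NegzE mulNr; apply/chord_freeN/cf_muln.
Qed.

Lemma chord_free_l1dist (d : int) (k a b : nat) : 0 < d -> chord_free d ->
  (a <= m)%N -> (b <= m)%N -> (k <= l1dist (z a) (hshift (z b) (k%:Z * d)))%N.
Proof.
move=> d_gt0 cf am bm; have [ip [iq [ip_m iq_m highest lowest]]] := extreme_heights.
have cf_mul j : j != 0 -> chord_free (j * d) := chord_free_mulz d_gt0 cf.
have strip_of i : (i <= m)%N -> (z iq).2 <= (z i).2 <= (z ip).2.
  by move=> im; rewrite lowest ?highest.
case: k => [//|k]; set l := l1dist _ _.
have [v [v0 vl steps strip]] := lattice_path (erefl l) (strip_of a am) (strip_of b bm).
case E : l vl steps strip => [|l'] vl steps strip.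
  by rewrite v0 in vl; case: (cf_mul k.+1%:Z isT b a bm am).
suff: (k <= l')%N by [].
pose meets (j : 'I_k) (i : 'I_l') := on_path (hshift (v i.+1) (- j.+1%:Z * d)).
apply: (@leq_of_injective_rel _ _ meets) => [j|i j j'].
- set c := - j.+1%:Z * d; set c' := (k.+1%:Z - j.+1%:Z) * d.
  have shifted_steps i : (i < l'.+1)%N ->
      gnorm2 (gsub (hshift (v i.+1) c) (hshift (v i) c)) = 1.
    by move=> il; rewrite gsub_hshift steps.
  have c_lt0 : c < 0 by rewrite /c mulNr oppr_lt0 mulr_gt0.
  have j_lt := ltn_ord j.
  have c'_gt0 : 0 < c' by rewrite mulr_gt0 // subr_gt0 ltz_nat ltnS.
  have cf_c : chord_free c by apply: cf_mul; lia.
  have cf_c' : chord_free c' by apply: cf_mul; lia.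
  have start : hshift (v 0) c = hshift (z a) c by rewrite v0.
  have stop : hshift (v l'.+1) c = hshift (z b) c'.
    by rewrite vl hshiftD /c /c' mulNr mulrBl.
  have [i /andP[i_gt0 i_lt] meets_i] := translate_meets ip_m iq_m highest lowest
    (v := fun i => hshift (v i) c) shifted_steps strip am bm c_lt0 c'_gt0 cf_c cf_c'
    start stop.
  case: i i_gt0 i_lt meets_i => [//|i] _ i_lt meets_i.
  by exists (Ordinal (i_lt : (i < l')%N)).
- move=> /on_pathP[a' a'm za'] /on_pathP[b' b'm zb']; apply: ord_inj; apply/eqP/negP => jj'.
  apply: (cf_mul (j'.+1%:Z - j.+1%:Z) _ b' a' b'm a'm); first by lia.
  by rewrite za' zb' hshiftD !mulNr mulrBl addrA addNr sub0r.
Qed.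

End LatticePath.

Theorem mainTheorem5 (n d : nat) (h : int) (m : nat) (z : nat -> gauss) :
  (0 < d)%N ->
  (forall j : nat, (j < m)%N -> gnorm2 (gsub (z j.+1) (z j)) = 1) ->
  (exists j1 j2 : nat, [/\ (j1 <= m)%N, (j2 <= m)%N &
       gsub (z j2) (z j1) = (n%:Z, h)]) ->
  `|rq n d| + `|h| + 1 <= kq n d ->
  exists j3 j4 : nat, [/\ (j3 <= m)%N, (j4 <= m)%N &
       gsub (z j3) (z j4) = (d%:Z, 0)].
Proof.
move=> d_gt0 unit_steps [j1 [j2 [j1m j2m z12]]] k_big.
apply: (chord_of_not_chord_free (c := d%:Z)) => cf.
have d_pos : 0 < d%:Z by rewrite ltz_nat.
have := chord_free_l1dist unit_steps `|kq n d|%N d_pos cf j2m j1m.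
move: z12 k_big; rewrite /gsub /l1dist /hshift /rq => -[z12_1 z12_2] k_big /=.
set K := kq n d in k_big *; lia.
Qed.
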